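(* Let $N,M,m\in\mathbb{N}$ with $M\geq 3$, and let $p_1,\ldots,p_m\in[1,\infty]$. Let $A$ be a nonempty subset of $\{1,\ldots,m\}$ such that $p_j=\infty$ for every $j\in A$. Then for every $m$-linear form $T:\ell_{p_1}^N\times\cdots\times\ell_{p_m}^N\to\mathbb{C}$, $$\|T\|_{A,M}\leq\|T\|\leq r_M^{-|A|}\|T\|_{A,M},$$ where $|A|$ is the cardinality of $A$.
   Context: $\ell_p^N$ denotes $\mathbb{C}^N$ with the $\ell_p$ norm (sup norm if $p=\infty$), with closed unit ball $B_{\ell_p^N}$. $\|T\|=\sup\{|T(x^{(1)},\ldots,x^{(m)})|: x^{(i)}\in B_{\ell_{p_i}^N}, 1\le i\le m\}$. $T_M=\{\exp(2j\pi i/M): j=0,\ldots,M-1\}$ is the set of $M$th roots of unity and $T_M^N=T_M\times\cdots\times T_M\subset\mathbb{C}^N$. $\|T\|_{A,M}:=\sup\{|T(x^{(1)},\ldots,x^{(m)})|: x^{(i)}\in B_{\ell_{p_i}^N}\text{ for } i\notin A,\ x^{(j)}\in T_M^N \text{ for } j\in A\}$. $r_M=\left(\frac12+\frac12\cos\left(\frac{2\pi}{M}\right)\right)^{1/2}$. *)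

From Stdlib Require Import Reals Lra List.
From Coquelicot Require Import Coquelicot.
Open Scope R_scope.

(* Vectors of C^N are represented as functions nat -> C (only the coordinates
   i < N are meaningful).  An m-tuple (x^(1),...,x^(m)) is a function
   x : nat -> (nat -> C) with x j = x^(j+1) (0-based indices j < m). *)

Fixpoint sumN (f : nat -> R) (n : nat) : R :=
  match n with O => 0 | S k => sumN f k + f k end.

Definition powp (a p : R) : R :=
  if Rlt_dec 0 a then Rpower a p else 0.

Definition in_ball (p : Rbar) (N : nat) (v : nat -> C) : Prop :=
  match p with
  | Finite q => sumN (fun i => powp (Cmod (v i)) q) N <= 1
  | p_infty => forall i, (i < N)%nat -> Cmod (v i) <= 1
  | m_infty => False
  end.

Definition in_TM (M : nat) (z : C) : Prop :=
  exists j : nat, (j < M)%nat /\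
    z = (cos (2 * PI * INR j / INR M), sin (2 * PI * INR j / INR M)).

Definition in_TMN (M N : nat) (v : nat -> C) : Prop :=
  forall i, (i < N)%nat -> in_TM M (v i).

Definition upd (x : nat -> nat -> C) (j : nat) (u : nat -> C) : nat -> nat -> C :=
  fun k => if Nat.eqb k j then u else x k.

Definition multilinear_form (m N : nat) (T : (nat -> nat -> C) -> C) : Prop :=
  (forall x y : nat -> nat -> C,
     (forall j i, (j < m)%nat -> (i < N)%nat -> x j i = y j i) -> T x = T y) /\
  (forall (x : nat -> nat -> C) (j : nat) (u v : nat -> C) (a b : C),
     (j < m)%nat ->
     T (upd x j (fun i => Cplus (Cmult a (u i)) (Cmult b (v i)))) =
     Cplus (Cmult a (T (upd x j u))) (Cmult b (T (upd x j v)))).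

Definition normT (m N : nat) (p : nat -> Rbar) (T : (nat -> nat -> C) -> C) : Rbar :=
  Lub_Rbar (fun r => exists x : nat -> nat -> C,
    (forall j, (j < m)%nat -> in_ball (p j) N (x j)) /\ r = Cmod (T x)).

Definition normTA (m N : nat) (p : nat -> Rbar) (A : list nat) (M : nat)
    (T : (nat -> nat -> C) -> C) : Rbar :=
  Lub_Rbar (fun r => exists x : nat -> nat -> C,
    (forall j, (j < m)%nat -> ~ In j A -> in_ball (p j) N (x j)) /\
    (forall j, In j A -> in_TMN M N (x j)) /\
    r = Cmod (T x)).

Definition r_M (M : nat) : R := sqrt (1/2 + 1/2 * cos (2 * PI / INR M)).

From Stdlib Require Import Reals Lra Lia List ZArith.
From Coquelicot Require Import Coquelicot.
Open Scope R_scope.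

(* Put r = r_M; the half-angle formula gives r = cos(pi/M).  Multiplying the
   arguments indexed by A by r multiplies |T| by r^|A| and puts all their
   coordinates in the closed disc of radius r.  In a single coordinate z the
   form is affine, z |-> a + b z, and since every direction lies within angle
   pi/M of an M-th root of unity, some w in T_M has Re(conj(a) b w) >= r|a||b|,
   whence |a + b z| <= |a| + r|b| <= |a + b w| whenever |z| <= r.  Replacing the
   disc coordinates by roots of unity one at a time thus never decreases |T|,
   so r^|A| |T(x)| <= ||T||_{A,M}.  The lower bound holds because T_M^N lies in
   the unit ball of l_oo^N. *)

Definition root_unity (M k : nat) : C :=
  (cos (2 * PI * INR k / INR M), sin (2 * PI * INR k / INR M)).

Lemma in_TM_root_unity (M k : nat) : (k < M)%nat -> in_TM M (root_unity M k).
Proof. intros Hk. now exists k. Qed.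

Lemma Cmod_in_TM (M : nat) (z : C) : in_TM M z -> Cmod z = 1.
Proof.
  intros [k [_ ->]]. unfold Cmod; cbn [fst snd].
  rewrite <- sqrt_1. f_equal.
  pose proof (sin2_cos2 (2 * PI * INR k / INR M)) as H. unfold Rsqr in H. lra.
Qed.

Lemma root_unity_period (M : nat) : (0 < M)%nat -> root_unity M M = root_unity M 0.
Proof.
  intros HM. apply lt_0_INR in HM. unfold root_unity. simpl INR.
  replace (2 * PI * INR M / INR M) with (2 * PI) by (field; lra).
  replace (2 * PI * 0 / INR M) with 0 by (field; lra).
  now rewrite cos_0, sin_0, cos_2PI, sin_2PI.
Qed.

Lemma polar_angle (u1 u2 : R) : u1 ^ 2 + u2 ^ 2 = 1 ->
  exists phi, 0 <= phi <= 2 * PI /\ cos phi = u1 /\ sin phi = u2.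
Proof.
  intros H.
  assert (Hb : -1 <= u1 <= 1) by (split; nra).
  assert (Hs : sqrt (1 - u1²) = Rabs u2).
  { replace (1 - u1²) with (u2²) by (unfold Rsqr; lra). apply sqrt_Rsqr_abs. }
  pose proof (acos_bound u1). pose proof PI_RGT_0.
  destruct (Rle_or_lt 0 u2) as [Hu | Hu].
  - exists (acos u1). split; [lra |]. split; [now apply cos_acos |].
    rewrite sin_acos, Hs by auto. now apply Rabs_pos_eq.
  - exists (2 * PI - acos u1). split; [lra |].
    rewrite cos_minus, sin_minus, cos_2PI, sin_2PI, cos_acos, sin_acos by auto.
    rewrite Hs, Rabs_left by auto. split; ring.
Qed.

Lemma nearest_nat (t : R) (M : nat) : 0 <= t <= INR M ->
  exists k : nat, (k <= M)%nat /\ Rabs (INR k - t) <= 1 / 2.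
Proof.
  intros [H0 H1].
  destruct (archimed (t - 1 / 2)) as [A1 A2].
  set (z := up (t - 1 / 2)) in *.
  assert (Hz : (-1 < z)%Z) by (apply lt_IZR; lra).
  exists (Z.to_nat z).
  assert (E : INR (Z.to_nat z) = IZR z) by (rewrite INR_IZR_INZ, Z2Nat.id; [auto | lia]).
  split.
  - assert (Hlt : IZR z < IZR (Z.of_nat M + 1)) by (rewrite plus_IZR, <- INR_IZR_INZ; simpl; lra).
    apply lt_IZR in Hlt. lia.
  - rewrite E. apply Rabs_le. lra.
Qed.

Lemma cos_le_cos_Rabs (a d : R) : 0 <= a <= PI -> Rabs d <= a -> cos a <= cos d.
Proof.
  intros Ha Hd.
  assert (E : cos d = cos (Rabs d)).
  { destruct (Rcase_abs d); [rewrite Rabs_left, cos_neg | rewrite Rabs_right]; auto. }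
  rewrite E. pose proof (Rabs_pos d). apply cos_decr_1; lra.
Qed.

Lemma Cmod_add_sqr (a c : C) :
  Cmod (a + c) ^ 2 = Cmod a ^ 2 + Cmod c ^ 2 + 2 * Re (Cconj a * c).
Proof.
  rewrite !Cmod2_alt. destruct a as [a1 a2], c as [c1 c2].
  unfold Re, Im; simpl. ring.
Qed.

Section RootsOfUnity.

Variable M : nat.
Hypothesis HM : (3 <= M)%nat.

Let INR_M_ge_3 : 3 <= INR M.
Proof. replace 3 with (INR 3) by (simpl; lra). now apply le_INR. Qed.

Let half_angle_bounds : 0 < PI / INR M < PI / 2.
Proof.
  pose proof PI_RGT_0. split; [apply Rdiv_lt_0_compat; lra |].
  apply Rmult_lt_reg_r with (2 * INR M); [lra |]. field_simplify; nra.
Qed.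

Lemma r_M_eq_cos : r_M M = cos (PI / INR M).
Proof.
  assert (Hc : 0 < cos (PI / INR M)) by (apply cos_gt_0; lra).
  unfold r_M. replace (2 * PI / INR M) with (2 * (PI / INR M)) by (field; lra).
  rewrite cos_2a_cos.
  replace (1 / 2 + 1 / 2 * (2 * cos (PI / INR M) * cos (PI / INR M) - 1))
    with (cos (PI / INR M))² by (unfold Rsqr; field).
  apply sqrt_Rsqr. lra.
Qed.

Lemma r_M_gt_0 : 0 < r_M M.
Proof. rewrite r_M_eq_cos. apply cos_gt_0; lra. Qed.

Lemma r_M_le_1 : r_M M <= 1.
Proof. rewrite r_M_eq_cos. apply COS_bound. Qed.

Lemma root_unity_near_angle (phi : R) : 0 <= phi <= 2 * PI ->
  exists k, (k < M)%nat /\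
    r_M M <= cos phi * Re (root_unity M k) + sin phi * Im (root_unity M k).
Proof.
  intros Hphi. pose proof PI_RGT_0. pose proof half_angle_bounds.
  destruct (nearest_nat (phi * INR M / (2 * PI)) M) as [k0 [Hk0 Hr]].
  { split.
    - apply Rmult_le_pos; [nra | left; apply Rinv_0_lt_compat; lra].
    - apply Rmult_le_reg_r with (2 * PI); [lra |]. field_simplify; nra. }
  assert (Hd : Rabs (phi - 2 * PI * INR k0 / INR M) <= PI / INR M).
  { replace (phi - 2 * PI * INR k0 / INR M)
      with (2 * PI / INR M * - (INR k0 - phi * INR M / (2 * PI))) by (field; lra).
    rewrite Rabs_mult, Rabs_Ropp, Rabs_right by (apply Rle_ge, Rlt_le, Rdiv_lt_0_compat; lra).
    apply Rle_trans with (2 * PI / INR M * (1 / 2)); [| right; field; lra].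
    apply Rmult_le_compat_l; [apply Rlt_le, Rdiv_lt_0_compat |]; lra. }
  assert (Hcos : cos (PI / INR M) <= cos (phi - 2 * PI * INR k0 / INR M))
    by (apply cos_le_cos_Rabs; lra).
  rewrite cos_minus, <- r_M_eq_cos in Hcos.
  destruct (Nat.eq_dec k0 M) as [-> | Hne].
  - exists 0%nat. split; [lia |]. rewrite <- root_unity_period by lia. exact Hcos.
  - exists k0. split; [lia | exact Hcos].
Qed.

Lemma root_unity_aligned (v : C) :
  exists k, (k < M)%nat /\ r_M M * Cmod v <= Re (v * root_unity M k).
Proof.
  destruct v as [v1 v2].
  set (s := Cmod (v1, v2)).
  assert (Hs2 : s * s = v1 ^ 2 + v2 ^ 2) by (unfold s, Cmod; apply sqrt_sqrt; simpl; nra).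
  assert (Hs0 : 0 <= s) by apply Cmod_ge_0.
  destruct (Req_dec s 0) as [E | E].
  { exists 0%nat. split; [lia |]. rewrite E.
    assert (v1 = 0 /\ v2 = 0) as [-> ->] by (split; nra). simpl. lra. }
  destruct (polar_angle (v1 / s) (- v2 / s)) as [phi [Hphi [Hc Hsn]]].
  { field_simplify; [rewrite <- Hs2; field |]; auto. }
  destruct (root_unity_near_angle phi Hphi) as [k [Hk Hnear]].
  exists k. split; auto.
  rewrite Hc, Hsn in Hnear. destruct (root_unity M k) as [c sn].
  unfold Re, Im in *; simpl in *.
  replace (v1 * c - v2 * sn) with (s * (v1 / s * c + - v2 / s * sn)) by (field; auto).
  rewrite (Rmult_comm (r_M M)). apply Rmult_le_compat_l; lra.
Qed.

Lemma Cmod_affine_le_root_unity (a b z : C) : Cmod z <= r_M M ->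
  exists k, (k < M)%nat /\ Cmod (a + b * z) <= Cmod (a + b * root_unity M k).
Proof.
  intros Hz.
  destruct (root_unity_aligned (Cconj a * b)) as [k [Hk Hal]].
  exists k. split; auto.
  rewrite Cmod_mult, Cmod_conj in Hal.
  set (w := root_unity M k) in *.
  assert (Hw : Cmod w = 1) by (apply (Cmod_in_TM M), in_TM_root_unity; auto).
  pose proof r_M_gt_0. pose proof r_M_le_1.
  pose proof (Cmod_ge_0 a). pose proof (Cmod_ge_0 b). pose proof (Cmod_ge_0 (a + b * w)).
  assert (Hle : Cmod (a + b * z) <= Cmod a + r_M M * Cmod b).
  { eapply Rle_trans; [apply Cmod_triangle |]. rewrite Cmod_mult.
    apply Rplus_le_compat_l. rewrite (Rmult_comm (r_M M)).
    apply Rmult_le_compat_l; auto. }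
  assert (Hsq : (Cmod a + r_M M * Cmod b) ^ 2 <= Cmod (a + b * w) ^ 2).
  { rewrite Cmod_add_sqr, Cmod_mult, Hw, Cmult_assoc.
    assert (r_M M * r_M M <= 1) by nra. nra. }
  nra.
Qed.

End RootsOfUnity.

Definition set_coord (u : nat -> C) (i0 : nat) (z : C) : nat -> C :=
  fun i => if Nat.eqb i i0 then z else u i.

Definition scale_args (c : C) (L : list nat) (x : nat -> nat -> C) : nat -> nat -> C :=
  fun j => if in_dec Nat.eq_dec j L then (fun i => c * x j i)%C else x j.

Section MultilinearForm.

Variables (m N : nat) (T : (nat -> nat -> C) -> C).
Hypothesis HT : multilinear_form m N T.

Lemma multilinear_ext (x y : nat -> nat -> C) :
  (forall j i, (j < m)%nat -> (i < N)%nat -> x j i = y j i) -> T x = T y.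
Proof. apply HT. Qed.

Lemma multilinear_upd_id (x : nat -> nat -> C) (j : nat) (u : nat -> C) :
  (forall i, u i = x j i) -> T (upd x j u) = T x.
Proof.
  intros Hu. apply multilinear_ext. intros k i _ _. unfold upd.
  destruct (Nat.eqb_spec k j) as [-> |]; auto.
Qed.

Lemma multilinear_scale (x : nat -> nat -> C) (j : nat) (c : C) (u : nat -> C) :
  (j < m)%nat -> T (upd x j (fun i => c * u i)%C) = (c * T (upd x j u))%C.
Proof.
  intros Hj.
  transitivity (T (upd x j (fun i => c * u i + 0 * u i)%C)).
  { apply multilinear_ext. intros k i _ _. unfold upd. destruct (Nat.eqb k j); [ring | auto]. }
  rewrite (proj2 HT) by auto. ring.
Qed.

Lemma multilinear_set_coord (y : nat -> nat -> C) (j i0 : nat) (z : C) : (j < m)%nat ->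
  T (upd y j (set_coord (y j) i0 z)) =
  (T (upd y j (set_coord (y j) i0 0)) + T (upd y j (set_coord (fun _ => 0%C) i0 1)) * z)%C.
Proof.
  intros Hj.
  rewrite (Cmult_comm _ z), <- (Cmult_1_l (T (upd y j (set_coord (y j) i0 0)))).
  rewrite <- (proj2 HT) by auto.
  apply multilinear_ext. intros k i _ _. unfold upd, set_coord.
  destruct (Nat.eqb k j); [destruct (Nat.eqb i i0); ring | auto].
Qed.

Lemma multilinear_scale_args (c : C) (L : list nat) (x : nat -> nat -> C) :
  NoDup L -> (forall j, In j L -> (j < m)%nat) ->
  T (scale_args c L x) = (c ^ length L * T x)%C.
Proof.
  induction L as [| a L IH]; intros HN HL.
  { simpl. rewrite Cmult_1_l. apply multilinear_ext. intros j i _ _. reflexivity. }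
  inversion HN as [| ? ? HaL HNL]; subst.
  transitivity (T (upd (scale_args c L x) a (fun i => c * x a i)%C)).
  { apply multilinear_ext. intros j i _ _. unfold upd, scale_args.
    destruct (Nat.eqb_spec j a) as [-> |].
    - destruct (in_dec Nat.eq_dec a (a :: L)) as [_ | n]; [auto | now destruct n; left].
    - destruct (in_dec Nat.eq_dec j (a :: L)) as [[E | E] | E],
        (in_dec Nat.eq_dec j L); try congruence; try tauto.
      exfalso. apply E. now right. }
  rewrite multilinear_scale by (apply HL; now left).
  rewrite multilinear_upd_id, IH; auto.
  - simpl. now rewrite Cmult_assoc.
  - intros j Hj. apply HL. now right.
  - intros i. unfold scale_args. now destruct (in_dec Nat.eq_dec a L).
Qed.

End MultilinearForm.

Definition TM_admissible (m N M : nat) (p : nat -> Rbar) (A : list nat)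
    (y : nat -> nat -> C) : Prop :=
  (forall j, (j < m)%nat -> ~ In j A -> in_ball (p j) N (y j)) /\
  (forall j, In j A -> in_TMN M N (y j)).

Definition disc_admissible (m N M : nat) (p : nat -> Rbar) (A : list nat)
    (y : nat -> nat -> C) : Prop :=
  (forall j, (j < m)%nat -> ~ In j A -> in_ball (p j) N (y j)) /\
  (forall j i, In j A -> (i < N)%nat -> in_TM M (y j i) \/ Cmod (y j i) <= r_M M).

Section PushToRoots.

Variables (m N M : nat) (p : nat -> Rbar) (A : list nat) (T : (nat -> nat -> C) -> C).
Hypothesis HM : (3 <= M)%nat.
Hypothesis HT : multilinear_form m N T.
Hypothesis HA : forall j, In j A -> (j < m)%nat.

Lemma push_coord_to_root (y : nat -> nat -> C) (j0 i0 : nat) :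
  disc_admissible m N M p A y ->
  exists y', disc_admissible m N M p A y' /\ Cmod (T y) <= Cmod (T y') /\
    (forall j i, (j, i) <> (j0, i0) -> y' j i = y j i) /\
    (In j0 A -> (i0 < N)%nat -> in_TM M (y' j0 i0)).
Proof.
  intros [Hout Hin].
  assert (Hcase : (In j0 A /\ (i0 < N)%nat /\ Cmod (y j0 i0) <= r_M M) \/
                  (In j0 A -> (i0 < N)%nat -> in_TM M (y j0 i0))).
  { destruct (in_dec Nat.eq_dec j0 A) as [Hj0 | Hj0]; [| right; tauto].
    destruct (lt_dec i0 N) as [Hi0 | Hi0]; [| right; tauto].
    destruct (Hin j0 i0 Hj0 Hi0); [right | left]; auto. }
  destruct Hcase as [[Hj0 [Hi0 Hdisc]] | Hroot].
  2: { exists y. split; [split; auto | split; [lra | split; auto]]. }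
  destruct (Cmod_affine_le_root_unity M HM (T (upd y j0 (set_coord (y j0) i0 0)))
              (T (upd y j0 (set_coord (fun _ => 0%C) i0 1))) (y j0 i0) Hdisc)
    as [k [Hk Hle]].
  exists (upd y j0 (set_coord (y j0) i0 (root_unity M k))).
  split; [split | split; [| split]].
  - intros j Hj HjA. unfold upd.
    destruct (Nat.eqb_spec j j0) as [-> |]; [contradiction | auto].
  - intros j i HjA Hi. unfold upd, set_coord.
    destruct (Nat.eqb_spec j j0) as [-> |]; [| auto].
    destruct (Nat.eqb_spec i i0) as [-> |]; [left; now apply in_TM_root_unity | auto].
  - rewrite <- (multilinear_upd_id m N T HT y j0 (set_coord (y j0) i0 (y j0 i0))).
    + rewrite (multilinear_set_coord m N T HT y j0 i0 (y j0 i0)),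
        (multilinear_set_coord m N T HT y j0 i0 (root_unity M k)) by auto.
      exact Hle.
    + intros i. unfold set_coord. now destruct (Nat.eqb_spec i i0) as [-> |].
  - intros j i Hne. unfold upd, set_coord.
    destruct (Nat.eqb_spec j j0) as [-> |]; [| auto].
    destruct (Nat.eqb_spec i i0) as [-> |]; [contradiction | auto].
  - intros _ _. unfold upd, set_coord. rewrite !Nat.eqb_refl.
    now apply in_TM_root_unity.
Qed.

Lemma push_coords_to_roots (L : list (nat * nat)) (y : nat -> nat -> C) :
  disc_admissible m N M p A y ->
  (forall j i, In j A -> (i < N)%nat -> ~ In (j, i) L -> in_TM M (y j i)) ->
  exists y', TM_admissible m N M p A y' /\ Cmod (T y) <= Cmod (T y').
Proof.
  revert y. induction L as [| [j0 i0] L IH]; intros y Hy HL.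
  { exists y. split; [split; [apply Hy | intros j Hj i Hi; apply HL; auto] | lra]. }
  destruct (push_coord_to_root y j0 i0 Hy) as [y1 [Hy1 [Hle1 [Hoff Hat]]]].
  destruct (IH y1 Hy1) as [y' [Hy' Hle']].
  - intros j i Hj Hi HnL.
    destruct (Nat.eq_dec j j0) as [-> |]; [destruct (Nat.eq_dec i i0) as [-> |] |].
    + now apply Hat.
    + rewrite Hoff by congruence. apply HL; auto. intros [E | E]; [congruence | tauto].
    + rewrite Hoff by congruence. apply HL; auto. intros [E | E]; [congruence | tauto].
  - exists y'. split; [auto | lra].
Qed.

Lemma disc_admissible_to_TM (y : nat -> nat -> C) : disc_admissible m N M p A y ->
  exists y', TM_admissible m N M p A y' /\ Cmod (T y) <= Cmod (T y').
Proof.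
  intros Hy. apply push_coords_to_roots with (L := list_prod A (seq 0 N)); auto.
  intros j i Hj Hi Hn. exfalso. apply Hn, in_prod; [auto | apply in_seq; lia].
Qed.

End PushToRoots.

Lemma Lub_Rbar_le_incl (E F : R -> Prop) :
  (forall a, E a -> F a) -> Rbar_le (Lub_Rbar E) (Lub_Rbar F).
Proof.
  intros H. destruct (Lub_Rbar_correct E) as [_ HE], (Lub_Rbar_correct F) as [HF _].
  apply HE. intros a Ha. now apply HF, H.
Qed.

Lemma Lub_Rbar_le_scal (E F : R -> Prop) (c : R) : 0 < c ->
  (forall a, E a -> exists b, F b /\ a <= c * b) ->
  Rbar_le (Lub_Rbar E) (Rbar_mult c (Lub_Rbar F)).
Proof.
  intros Hc H. destruct (Lub_Rbar_correct E) as [_ HE], (Lub_Rbar_correct F) as [HF _].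
  apply HE. intros a Ha. destruct (H a Ha) as [b [Hb Hab]].
  specialize (HF b Hb). destruct (Lub_Rbar F) as [l | |]; simpl in *.
  - nra.
  - destruct (Rle_dec 0 c) as [H0 |]; [destruct (Rle_lt_or_eq_dec 0 c H0) |];
      simpl; (exact I || lra).
  - destruct HF.
Qed.

Lemma TM_admissible_in_ball (m N M : nat) (p : nat -> Rbar) (A : list nat)
    (x : nat -> nat -> C) :
  (forall j, In j A -> p j = p_infty) -> TM_admissible m N M p A x ->
  forall j, (j < m)%nat -> in_ball (p j) N (x j).
Proof.
  intros HAinf [Hout Hin] j Hj.
  destruct (in_dec Nat.eq_dec j A) as [HjA | HjA]; [| auto].
  rewrite HAinf by auto. intros i Hi.
  rewrite (Cmod_in_TM M) by (apply Hin; auto). lra.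
Qed.

Lemma scale_args_disc_admissible (m N M : nat) (p : nat -> Rbar) (A : list nat)
    (x : nat -> nat -> C) :
  (forall j, In j A -> (j < m)%nat) -> (forall j, In j A -> p j = p_infty) ->
  (forall j, (j < m)%nat -> in_ball (p j) N (x j)) ->
  disc_admissible m N M p A (scale_args (r_M M) A x).
Proof.
  intros HA HAinf Hx. split.
  - intros j Hj HjA. unfold scale_args.
    destruct (in_dec Nat.eq_dec j A); [contradiction | auto].
  - intros j i HjA Hi. right. unfold scale_args.
    destruct (in_dec Nat.eq_dec j A); [| contradiction].
    assert (Hr : 0 <= r_M M) by apply sqrt_pos.
    pose proof (Hx j (HA j HjA)) as Hball. rewrite HAinf in Hball by auto.
    specialize (Hball i Hi).
    rewrite Cmod_mult, Cmod_R, Rabs_pos_eq by auto. nra.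
Qed.

Theorem mainTheorem3 (N M m : nat) (p : nat -> Rbar) (A : list nat)
  (T : (nat -> nat -> C) -> C) :
  (3 <= M)%nat ->
  (forall j, (j < m)%nat -> Rbar_le (Finite 1) (p j)) ->
  A <> nil -> NoDup A -> (forall j, In j A -> (j < m)%nat) ->
  (forall j, In j A -> p j = p_infty) ->
  multilinear_form m N T ->
  Rbar_le (normTA m N p A M T) (normT m N p T) /\
  Rbar_le (normT m N p T)
          (Rbar_mult (Finite (/ (r_M M) ^ length A)) (normTA m N p A M T)).
Proof.
  intros HM _ _ HND HA HAinf HT.
  pose proof (r_M_gt_0 M HM) as Hr.
  assert (Hrn : 0 < r_M M ^ length A) by now apply pow_lt.
  split.
  - apply Lub_Rbar_le_incl. intros a [x [Hout [Hin ->]]].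
    exists x. split; [| reflexivity].
    now apply (TM_admissible_in_ball m N M p A x HAinf).
  - apply Lub_Rbar_le_scal; [now apply Rinv_0_lt_compat |].
    intros a [x [Hx ->]].
    destruct (disc_admissible_to_TM m N M p A T HM HT HA (scale_args (r_M M) A x))
      as [y [[Hout Hin] Hle]]; [now apply scale_args_disc_admissible |].
    exists (Cmod (T y)). split; [now exists y |].
    rewrite (multilinear_scale_args m N T HT), Cmod_mult, Cmod_pow, Cmod_R,
      Rabs_pos_eq in Hle by (auto; lra).
    apply Rmult_le_reg_l with (r_M M ^ length A); [auto |].
    rewrite <- Rmult_assoc, Rinv_r, Rmult_1_l by lra. exact Hle.
Qed.
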